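(* Let $G,H$ be graphs (connected or not, each with at least one vertex), and write $a=\widetilde\iota(G)$, $b=\widetilde\iota(H)$. Then $$\iota(G+H)=\begin{cases}\dfrac{ab-1}{a+b-2}, & a,b<\infty,\ a+b\neq2,\\[2mm] 1, & a=b=1,\\ \infty, & a+b=2,\ (a,b)\neq(1,1),\\ b, & a=\infty,\ b<\infty,\\ a, & b=\infty,\ a<\infty,\\ \infty, & a=b=\infty.\end{cases}$$
   Context: For a connected graph $G$ on vertices $v_1,\dots,v_n$, its distance matrix is $D=(d(v_i,v_j))_{i,j=1}^n$, where $d$ is the shortest-path distance; $\vec 1$ denotes the all-ones vector. $G$ is distance exceptional if $D\vec x=\vec 1$ has no solution. Curvature index $\iota(G)\in\mathbb{R}\cup\{\infty\}$ of a connected graph: if $D\vec x=\vec1$ has no solution or has a solution with $\vec 1^\top\vec x\neq0$, then $\iota(G)$ is the unique real number with $\{D\vec x:\vec 1^\top\vec x=1\}\cap\mathbb{R}\vec 1=\{\iota(G)\vec 1\}$; otherwise (solutions exist and all have $\vec 1^\top\vec x=0$) $\iota(G)=\infty$. The join $G+H$ is obtained from the disjoint union of $G$ and $H$ by adding all edges between $V(G)$ and $V(H)$. For a graph $G$ (possibly disconnected) on $n$ vertices, $\widetilde D(G)\in\mathbb{R}^{n\times n}$ is the principal submatrix indexed by $V(G)$ of the distance matrix of the cone $G+\mathsf{K}_1$; i.e. $\widetilde D(G)_{uv}=0$ if $u=v$, $1$ if $u\sim v$, and $2$ otherwise. The modified curvature index $\widetilde\iota(G)\in\mathbb{R}\cup\{\infty\}$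 is defined exactly as $\iota$ with $D$ replaced by $\widetilde D(G)$: if $\widetilde D(G)\vec x=\vec 1$ has no solution or has a solution with $\vec1^\top\vec x\ne0$, then $\widetilde\iota(G)$ is the unique real with $\{\widetilde D(G)\vec x:\vec1^\top\vec x=1\}\cap\mathbb{R}\vec1=\{\widetilde\iota(G)\vec1\}$; otherwise $\widetilde\iota(G)=\infty$. *)

From HB Require Import structures.
From mathcomp Require Import all_boot all_order all_algebra.
Set Implicit Arguments. Unset Strict Implicit. Unset Printing Implicit Defensive.
Import Order.TTheory GRing.Theory Num.Theory.
Local Open Scope ring_scope.

Definition simple_graph (V : finType) (e : rel V) : Prop :=
  symmetric e /\ irreflexive e.

Fixpoint reach (V : finType) (e : rel V) (n : nat) (x y : V) : bool :=
  match n with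
  | 0 => x == y
  | n'.+1 => reach e n' x y || [exists z, reach e n' x z && e z y]
  end.

(* Shortest-path distance: the least n with a walk of length <= n from x to y
   (meaningful for connected graphs, where it is always < #|V|). *)
Definition sp_dist (V : finType) (e : rel V) (x y : V) : nat :=
  find (fun n => reach e n x y) (iota 0 #|V|).

Definition dist_mx (R : numDomainType) (V : finType) (e : rel V) : V -> V -> R :=
  fun u v => (sp_dist e u v)%:R.

(* Modified distance matrix: distance matrix of the cone G + K_1 restricted to V(G). *)
Definition dtilde_mx (R : numDomainType) (V : finType) (e : rel V) : V -> V -> R :=
  fun u v => if u == v then 0 else if e u v then 1 else 2.

Definition join_rel (V1 V2 : finType) (e1 : rel V1) (e2 : rel V2)
  : rel (V1 + V2)%type :=
  fun u v => match u, v with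
             | inl a, inl b => e1 a b
             | inr a, inr b => e2 a b
             | _, _ => true
             end.

Definition mxv (R : numDomainType) (V : finType) (D : V -> V -> R) (x : V -> R)
  : V -> R := fun u => \sum_(v : V) D u v * x v.

(* curv_index D c : c (None = infinity) is the curvature index of the
   matrix D, exactly as in the definition of iota. *)
Definition curv_cond (R : numDomainType) (V : finType) (D : V -> V -> R) : Prop :=
  (~ exists x : V -> R, forall u, mxv D x u = 1) \/
  (exists x : V -> R, (forall u, mxv D x u = 1) /\ \sum_(v : V) x v != 0).

Definition curv_index (R : numDomainType) (V : finType) (D : V -> V -> R)
  (c : option R) : Prop :=
  (curv_cond D ->
     exists r : R, c = Some r /\
       (forall s : R, (exists x : V -> R, \sum_(v : V) x v = 1 /\
                          forall u, mxv D x u = s) <-> s = r)) /\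
  (~ curv_cond D -> c = None).

Definition join_formula (R : numFieldType) (a b : option R) : option R :=
  match a, b with
  | Some a, Some b =>
      if a + b != 2 then Some ((a * b - 1) / (a + b - 2))
      else if (a == 1) && (b == 1) then Some 1 else None
  | None, Some b => Some b
  | Some a, None => Some a
  | None, None => None
  end.

From mathcomp Require Import all_boot all_order all_algebra.
From mathcomp Require Import ring.
From Stdlib Require Import Classical.
Import Order.TTheory GRing.Theory Num.Theory.
Set Implicit Arguments. Unset Strict Implicit. Unset Printing Implicit Defensive.
Local Open Scope ring_scope.

(* For a square matrix M, the pairs (p, t) such that some x with total mass
   1^T x = p satisfies M x = t 1 form a linear subspace of R^2, and M has
   curvature index c exactly when this subspace is the line t = c p (the line
   p = 0 when c is infinite).  In G + H any two vertices on one side have a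
   common neighbour on the other side, so the distance matrix of the join is
   the block matrix [D~(G) J; J D~(H)] with J all ones.  Hence (P, s) is
   attained by the join iff P = p + q where (p, s - q) is attained by D~(G) and
   (q, s - p) by D~(H); intersecting the two lines gives the formula. *)

Section Attains.
Variables (R : numFieldType) (V : finType) (M : V -> V -> R).

Definition attains (p t : R) : Prop :=
  exists x : V -> R, \sum_(v : V) x v = p /\ forall u, mxv M x u = t.

Lemma attains_comb p1 t1 p2 t2 c1 c2 p t :
  attains p1 t1 -> attains p2 t2 ->
  p = c1 * p1 + c2 * p2 -> t = c1 * t1 + c2 * t2 -> attains p t.
Proof.
move=> [x1 [s1 h1]] [x2 [s2 h2]] -> ->.
exists (fun v => c1 * x1 v + c2 * x2 v); split.
  by rewrite big_split /= -!mulr_sumr s1 s2.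
move=> u; rewrite /mxv -(h1 u) -(h2 u) /mxv !mulr_sumr -big_split /=.
by apply: eq_bigr => v _; ring.
Qed.

Definition index_line (c : option R) (p t : R) : Prop :=
  if c is Some r then t = r * p else p = 0.

Lemma curv_index_Some r :
  curv_index M (Some r) <-> forall p t, attains p t <-> t = r * p.
Proof.
split=> [[hcond hnone] | hline].
  have /hcond [_ [[<-] h1]] : curv_cond M by apply: NNPP => /hnone.
  have h1r : attains 1 r by apply/h1.
  move=> p t; split=> [hpt | ->]; last first.
    by apply: (attains_comb (c1 := p) (c2 := 0) h1r h1r); ring.
  apply: NNPP => /eqP; rewrite -subr_eq0 => ne.
  have h0 : attains 0 (t - r * p).
    by apply: (attains_comb (c1 := 1) (c2 := - p) hpt h1r); ring.
  have /h1/eqP : attains 1 (r + 1).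
    by apply: (attains_comb (c1 := 1) (c2 := (t - r * p)^-1) h1r h0); field.
  by rewrite -subr_eq0 addrAC subrr add0r oner_eq0.
have hcond : curv_cond M.
  have [r0 | rn0] := eqVneq r 0.
    left=> [[x hx]].
    have /hline : attains (\sum_v x v) 1 by exists x.
    by rewrite r0 mul0r => /eqP; rewrite oner_eq0.
  have [x [sx hx]] : attains r^-1 1 by apply/hline; rewrite mulfV.
  by right; exists x; rewrite sx invr_eq0.
split=> [_ | //]; exists r; split=> // s.
by have := hline 1 s; rewrite mulr1.
Qed.

Lemma curv_index_None :
  curv_index M None <-> forall p t, attains p t <-> p = 0.
Proof.
split=> [[hcond _] | hline].
  have ncond : ~ curv_cond M by move=> /hcond [r []].
  have mass0 : forall p, attains p 1 -> p = 0.
    move=> p [x [<- hx]]; apply: NNPP => /eqP hn.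
    by apply: ncond; right; exists x.
  have h01 : attains 0 1.
    have [x hx] : exists x : V -> R, forall u, mxv M x u = 1.
      by apply: NNPP => hn; apply: ncond; left.
    by exists x; split=> //; apply: mass0; exists x.
  move=> p t; split=> [hpt | ->].
    by apply: mass0; apply: (attains_comb (c1 := 1) (c2 := 1 - t) hpt h01); ring.
  by apply: (attains_comb (c1 := t) (c2 := 0) h01 h01); ring.
split=> [[hx | [x [hx /eqP nz]]] | //]; exfalso.
  have [y [_ hy]] : attains 0 1 by apply/hline.
  by apply: hx; exists y.
by apply: nz; apply/hline; exists x.
Qed.

Lemma curv_indexP c :
  curv_index M c <-> forall p t, attains p t <-> index_line c p t.
Proof. by case: c => [r|]; [exact: curv_index_Some | exact: curv_index_None]. Qed.

End Attains.

Section ShortestPaths.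
Variables (W : finType) (e : rel W).

Lemma exists_eq_rel u v : [exists z, (u == z) && e z v] = e u v.
Proof.
apply/existsP/idP => [[z /andP [/eqP -> //]] | euv].
by exists u; rewrite eqxx.
Qed.

Lemma sp_dist_refl u : sp_dist e u u = 0%N.
Proof.
rewrite /sp_dist; have : (0 < #|W|)%N by apply/card_gt0P; exists u.
by case: #|W| => //= n _; rewrite eqxx.
Qed.

Lemma sp_dist_edge u v : u != v -> e u v -> sp_dist e u v = 1%N.
Proof.
move=> uv euv; rewrite /sp_dist.
have : (1 < #|W|)%N by have := max_card [set u; v]; rewrite cards2 uv.
by case: #|W| => [|[|n]] //= _; rewrite (negbTE uv) /= exists_eq_rel euv.
Qed.

Lemma sp_dist_common_nbr u v w :
  u != v -> ~~ e u v -> e u w -> e w v -> sp_dist e u v = 2%N.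
Proof.
move=> uv nuv euw ewv; rewrite /sp_dist.
have uw : u != w by apply: contraNneq nuv => ->.
have vw : v != w by apply: contraNneq nuv => ->.
have : (2 < #|W|)%N.
  have := max_card [predU1 u & [predU1 v & pred1 w]].
  by rewrite !cardU1 card1 !inE negb_or uv uw vw.
case: #|W| => [|[|[|n]]] //= _.
rewrite (negbTE uv) /= exists_eq_rel (negbTE nuv) ifT //.
by apply/existsP; exists w; rewrite exists_eq_rel euw orbT.
Qed.

Lemma dist_mx_common_nbr (R : numDomainType) u v w :
  e u w -> e w v -> dist_mx R e u v = dtilde_mx R e u v.
Proof.
rewrite /dist_mx /dtilde_mx => euw ewv.
have [<- | uv] := eqVneq u v; first by rewrite sp_dist_refl.
case: ifP => [euv | /negbT nuv]; first by rewrite sp_dist_edge.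
by rewrite (sp_dist_common_nbr uv nuv euw ewv).
Qed.

End ShortestPaths.

Section Join.
Variables (R : numFieldType) (V1 V2 : finType) (e1 : rel V1) (e2 : rel V2).
Variables (w1 : V1) (w2 : V2).

Local Notation D := (dist_mx R (join_rel e1 e2)).
Local Notation D1 := (dtilde_mx R e1).
Local Notation D2 := (dtilde_mx R e2).

Lemma join_dist_inl a b : D (inl a) (inl b) = D1 a b.
Proof. by rewrite (@dist_mx_common_nbr _ _ _ _ _ (inr w2)). Qed.

Lemma join_dist_inr a b : D (inr a) (inr b) = D2 a b.
Proof. by rewrite (@dist_mx_common_nbr _ _ _ _ _ (inl w1)). Qed.

Lemma join_dist_inlr a b : D (inl a) (inr b) = 1.
Proof. by rewrite /dist_mx sp_dist_edge. Qed.

Lemma join_dist_inrl a b : D (inr a) (inl b) = 1.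
Proof. by rewrite /dist_mx sp_dist_edge. Qed.

Lemma mxv_join_inl x u :
  mxv D x (inl u) = mxv D1 (x \o inl) u + \sum_(b : V2) x (inr b).
Proof.
rewrite /mxv big_sumType; congr (_ + _); apply: eq_bigr => v _.
  by rewrite join_dist_inl.
by rewrite join_dist_inlr mul1r.
Qed.

Lemma mxv_join_inr x u :
  mxv D x (inr u) = \sum_(a : V1) x (inl a) + mxv D2 (x \o inr) u.
Proof.
rewrite /mxv big_sumType; congr (_ + _); apply: eq_bigr => v _.
  by rewrite join_dist_inrl mul1r.
by rewrite join_dist_inr.
Qed.

Lemma attains_join P s :
  attains D P s <->
  exists p q, P = p + q /\ attains D1 p (s - q) /\ attains D2 q (s - p).
Proof.
split=> [[x [sx hx]] | [p [q [-> [[x [sx hx]] [y [sy hy]]]]]]].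
  exists (\sum_(a : V1) x (inl a)), (\sum_(b : V2) x (inr b)).
  split; first by rewrite -sx big_sumType.
  split; [exists (x \o inl) | exists (x \o inr)]; split=> // u.
    by rewrite -(hx (inl u)) mxv_join_inl addrK.
  by rewrite -(hx (inr u)) mxv_join_inr addrC addKr.
exists (fun v => match v with inl a => x a | inr b => y b end); split.
  by rewrite big_sumType sx sy.
case=> u; first by rewrite mxv_join_inl /= hx sy subrK.
by rewrite mxv_join_inr /= hy sx addrC subrK.
Qed.

End Join.

Section JoinFormula.
Variable R : numFieldType.

Lemma join_line_generic (a b P s : R) : a + b != 2 ->
  (exists p q, P = p + q /\ s - q = a * p /\ s - p = b * q) <->
  s = (a * b - 1) / (a + b - 2) * P.
Proof.
move=> ab2; have d : a + b - 2 != 0 by rewrite subr_eq0.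
split=> [[p [q [-> [hp hq]]]] | ->].
  apply: (mulIf d); rewrite mulrAC divfK //; apply/eqP; rewrite -subr_eq0.
  have -> : s * (a + b - 2) - (a * b - 1) * (p + q) =
            (b - 1) * (s - q - a * p) + (a - 1) * (s - p - b * q) by ring.
  by rewrite hp hq !subrr !mulr0 addr0.
exists ((b - 1) / (a + b - 2) * P), ((a - 1) / (a + b - 2) * P).
by split; [|split]; field.
Qed.

Lemma join_line_degenerate (a b P s : R) : a + b = 2 -> a != 1 ->
  (exists p q, P = p + q /\ s - q = a * p /\ s - p = b * q) <-> P = 0.
Proof.
move=> ab2 a1; have hb : b = 2 - a by rewrite -ab2 addrAC subrr add0r.
have d : a - 1 != 0 by rewrite subr_eq0.
split=> [[p [q [-> [hp hq]]]] | ->].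
  apply: (mulfI d); rewrite mulr0.
  have -> : (a - 1) * (p + q) = (s - p - (2 - a) * q) - (s - q - a * p) by ring.
  by rewrite hp hq hb !subrr.
by exists (s / (a - 1)), (- (s / (a - 1))); rewrite hb; split; [|split]; field.
Qed.

Lemma join_line_unit (P s : R) :
  (exists p q, P = p + q /\ s - q = 1 * p /\ s - p = 1 * q) <-> s = 1 * P.
Proof.
split=> [[p [q [-> [hp _]]]] | ->]; first by rewrite mul1r -(subrK q s) hp mul1r.
by exists P, 0; rewrite !mul1r subr0 subrr addr0.
Qed.

Lemma join_formulaP (a b : option R) P s :
  (exists p q, P = p + q /\ index_line a p (s - q) /\ index_line b q (s - p)) <->
  index_line (join_formula a b) P s.
Proof.
case: a b => [a|] [b|] /=.
- case: ifP => [ab2 | /negbFE/eqP ab2]; first exact: join_line_generic.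
  case: ifP => [/andP [/eqP -> /eqP ->] | not11]; first exact: join_line_unit.
  apply: join_line_degenerate => //; apply: contraFneq not11 => a1.
  have b1 : b = 1 by apply: (addrI a); rewrite ab2 a1.
  by rewrite a1 b1 eqxx.
- split=> [[p [q [-> [hp q0]]]] | ->]; first by rewrite q0 addr0 -hp q0 subr0.
  by exists P, 0; rewrite addr0 subr0.
- split=> [[p [q [-> [p0 hq]]]] | ->]; first by rewrite p0 add0r -hq p0 subr0.
  by exists 0, P; rewrite add0r subr0.
- split=> [[p [q [-> [-> ->]]]] | ->]; first by rewrite addr0.
  by exists 0, 0; rewrite addr0.
Qed.

End JoinFormula.

Theorem theorem3p7 (R : realFieldType) (V1 V2 : finType)
  (e1 : rel V1) (e2 : rel V2) (a b : option R) :
  simple_graph e1 -> simple_graph e2 ->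
  (0 < #|V1|)%N -> (0 < #|V2|)%N ->
  curv_index (dtilde_mx R e1) a ->
  curv_index (dtilde_mx R e2) b ->
  curv_index (dist_mx R (join_rel e1 e2)) (join_formula a b).
Proof.
move=> _ _ /card_gt0P [w1 _] /card_gt0P [w2 _] /curv_indexP ha /curv_indexP hb.
apply/curv_indexP => P s; rewrite (attains_join e1 e2 w1 w2) -join_formulaP.
by split=> [] [p [q [-> [/ha h1 /hb h2]]]]; exists p, q.
Qed.
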